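(* Let $\kappa$ be any cardinal. For a $\kappa$-downward directed multi-relational Kripke frame $M=\langle W,S\rangle$ define $N(M)=\langle W,\nu_M\rangle$ where $\nu_M(x)=\{Y\subseteq W\mid R[x]\subseteq Y\text{ for some }R\in S\}$. Then $N(M)$ is a $\kappa$-complete neighborhood frame, and for any two $\kappa$-downward directed multi-relational Kripke frames $M_1=\langle W_1,S_1\rangle$, $M_2=\langle W_2,S_2\rangle$, a map $f:W_1\to W_2$ is a homomorphism of multi-relational Kripke frames $M_1\to M_2$ if and only if it is a homomorphism of neighborhood frames $N(M_1)\to N(M_2)$. In particular $N$ (with $N(f)=f$) is a full and faithful functor $\mathbf{MKF}_\kappa\to\mathbf{NFR}_\kappa$.
   Context: For a binary relation $R$ on $W$ and $x\in W$, $R[x]=\{y\in W\mid xRy\}$. A multi-relational Kripke frame is a pair $\langle W,S\rangle$ where $W$ is a non-empty set and $S$ is a non-empty set of binary relations on $W$. For a cardinal $\kappa$, it is $\kappa$-downward directed if for every $S'\subseteq S$ with $|S'|<\kappa$ there is $R\in S$ with $R\subseteq\bigcap S'$ (with $\bigcap\emptyset=W\times W$). A homomorphism of multi-relational Kripke frames $f:\langle W_1,S_1\rangle\to\langle W_2,S_2\rangle$ is a map $f:W_1\to W_2$ such that: (i) for every $x\in W_1$ and $R_2\in S_2$ there is $R_1\in S_1$ such that for all $y\in W_1$, $xR_1y$ implies $f(x)R_2f(y)$; (ii) for every $x\in W_1$ and $R_1\in S_1$ there is $R_2\in S_2$ such that for all $u\in W_2$, if $f(x)R_2u$ then there exists $y\in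 W_1$ with $xR_1y$ and $f(y)=u$. $\mathbf{MKF}_\kappa$ is the category of $\kappa$-downward directed multi-relational Kripke frames with these homomorphisms. A neighborhood frame is a pair $\langle C,\nu\rangle$ with $C$ non-empty and $\nu:C\to\mathcal P(\mathcal P(C))$. It is $\kappa$-complete if $C\in\nu(c)$ for all $c$, $\nu(c)$ is upward closed under $\subseteq$ for all $c$, and $\bigcap S'\in\nu(c)$ for every $c\in C$ and every non-empty $S'\subseteq\nu(c)$ with $|S'|<\kappa$. A homomorphism of neighborhood frames $f:\langle C_1,\nu_1\rangle\to\langle C_2,\nu_2\rangle$ is a map $f:C_1\to C_2$ such that for all $c\in C_1$, $X\subseteq C_2$: $f^{-1}[X]\in\nu_1(c)\iff X\in\nu_2(f(c))$. $\mathbf{NFR}_\kappa$ is the category of $\kappa$-complete neighborhood frames with these homomorphisms. *)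

(* A cardinal kappa is represented by a type K with |K| = kappa.
   |A| < |K| : there is an injection A -> K and no injection K -> A. *)
Definition injective {A B : Type} (f : A -> B) : Prop :=
  forall x y, f x = f y -> x = y.

Definition card_lt (A K : Type) : Prop :=
  (exists f : A -> K, injective f) /\ ~ (exists g : K -> A, injective g).

Definition rel (W : Type) := W -> W -> Prop.

Definition image_of {W : Type} (R : rel W) (x : W) : W -> Prop := fun y => R x y.

Definition is_MKF (W : Type) (S : rel W -> Prop) : Prop :=
  inhabited W /\ exists R, S R.

Definition down_directed (K : Type) (W : Type) (S : rel W -> Prop) : Prop :=
  forall S' : rel W -> Prop,
    (forall R, S' R -> S R) ->
    card_lt {R : rel W | S' R} K ->
    exists R, S R /\ (forall x y, R x y -> forall R', S' R' -> R' x y).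

Definition MKF_kappa (K W : Type) (S : rel W -> Prop) : Prop :=
  is_MKF W S /\ down_directed K W S.

Definition MKF_hom {W1 W2 : Type} (S1 : rel W1 -> Prop) (S2 : rel W2 -> Prop)
  (f : W1 -> W2) : Prop :=
  (forall x R2, S2 R2 -> exists R1, S1 R1 /\
      forall y, R1 x y -> R2 (f x) (f y)) /\
  (forall x R1, S1 R1 -> exists R2, S2 R2 /\
      forall u, R2 (f x) u -> exists y, R1 x y /\ f y = u).

Definition nbhd (C : Type) := C -> (C -> Prop) -> Prop.

Definition is_NFR (C : Type) (nu : nbhd C) : Prop := inhabited C.

Definition kappa_complete (K C : Type) (nu : nbhd C) : Prop :=
  (forall c, nu c (fun _ => True)) /\
  (forall c (X Y : C -> Prop), nu c X -> (forall z, X z -> Y z) -> nu c Y) /\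
  (forall c (S' : (C -> Prop) -> Prop),
      (exists X, S' X) ->
      (forall X, S' X -> nu c X) ->
      card_lt {X : C -> Prop | S' X} K ->
      nu c (fun z => forall X, S' X -> X z)).

Definition NFR_kappa (K C : Type) (nu : nbhd C) : Prop :=
  is_NFR C nu /\ kappa_complete K C nu.

Definition NFR_hom {C1 C2 : Type} (nu1 : nbhd C1) (nu2 : nbhd C2)
  (f : C1 -> C2) : Prop :=
  forall c (X : C2 -> Prop), nu1 c (fun z => X (f z)) <-> nu2 (f c) X.

Definition nu_of {W : Type} (S : rel W -> Prop) : nbhd W :=
  fun x Y => exists R, S R /\ (forall y, image_of R x y -> Y y).

(* Directedness makes the sets [R[x]], [R] in [S], a filter base at every
   point, so [nu_of S] is the filter they generate: fewer than kappa
   neighbourhoods are refined by fewer than kappa relations, and a common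
   lower bound of these relations yields a neighbourhood below their meet.
   The correspondence of homomorphisms needs no directedness: the back
   condition (ii) is the forward half of the neighbourhood condition, tested
   on the image set [f[R1[x]]], and the forth condition (i) is its backward
   half, tested on [R2[f x]]. *)

From Stdlib Require Import ClassicalEpsilon ProofIrrelevance.

Lemma card_lt_injective (A B K : Type) (h : A -> B) :
  injective h -> card_lt B K -> card_lt A K.
Proof.
  intros Hh [[f Hf] HnoK]. split.
  - exists (fun a => f (h a)). intros x y E. exact (Hh _ _ (Hf _ _ E)).
  - intros [g Hg]. apply HnoK. exists (fun k => h (g k)).
    intros x y E. exact (Hg _ _ (Hh _ _ E)).
Qed.

Lemma card_lt_range (A B K : Type) (g : A -> B) :
  card_lt A K -> card_lt {b : B | exists a, g a = b} K.
Proof.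
  destruct (choice (fun (r : {b : B | exists a, g a = b}) a => g a = proj1_sig r))
    as [pre Hpre].
  { intros [b [a Ha]]. exists a. exact Ha. }
  apply (card_lt_injective _ _ _ pre).
  intros [b1 P1] [b2 P2] E.
  pose proof (Hpre (exist _ b1 P1)) as E1; pose proof (Hpre (exist _ b2 P2)) as E2.
  simpl in E1, E2. rewrite E in E1. rewrite E1 in E2. subst b2.
  f_equal. apply proof_irrelevance.
Qed.

Section Neighbourhoods.

Variables (K W : Type) (S : rel W -> Prop).

Lemma nu_of_full (x : W) : (exists R, S R) -> nu_of S x (fun _ => True).
Proof. intros [R HR]. exists R. split; auto. Qed.

Lemma nu_of_upward (x : W) (X Y : W -> Prop) :
  nu_of S x X -> (forall z, X z -> Y z) -> nu_of S x Y.
Proof. intros [R [HR HX]] HXY. exists R. split; auto. Qed.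

Lemma nu_of_meet (x : W) (S' : (W -> Prop) -> Prop) :
  down_directed K W S ->
  (forall X, S' X -> nu_of S x X) ->
  card_lt {X : W -> Prop | S' X} K ->
  nu_of S x (fun z => forall X, S' X -> X z).
Proof.
  intros Hdir Hnbhd Hcard.
  destruct (choice (fun (s : {X | S' X}) R =>
                      S R /\ forall y, image_of R x y -> proj1_sig s y))
    as [base Hbase].
  { intros [X HX]. exact (Hnbhd X HX). }
  destruct (Hdir (fun R => exists s, base s = R)) as [R [HR Hbelow]].
  - intros R [s <-]. exact (proj1 (Hbase s)).
  - exact (card_lt_range _ _ _ base Hcard).
  - exists R. split; [exact HR|].
    intros y Hy X HX.
    apply (proj2 (Hbase (exist _ X HX))).
    apply (Hbelow x y Hy). exists (exist _ X HX). reflexivity.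
Qed.

Lemma nu_of_kappa_complete : MKF_kappa K W S -> NFR_kappa K W (nu_of S).
Proof.
  intros [[HW HS] Hdir]. split; [exact HW|]. split; [|split].
  - intros x. exact (nu_of_full x HS).
  - exact nu_of_upward.
  - intros x S' _. exact (nu_of_meet x S' Hdir).
Qed.

End Neighbourhoods.

Section Homomorphisms.

Variables (W1 W2 : Type) (S1 : rel W1 -> Prop) (S2 : rel W2 -> Prop)
  (f : W1 -> W2).

Lemma MKF_hom_NFR_hom : MKF_hom S1 S2 f -> NFR_hom (nu_of S1) (nu_of S2) f.
Proof.
  intros [Hforth Hback] x X. split.
  - intros [R1 [HR1 HX]].
    destruct (Hback x R1 HR1) as [R2 [HR2 Hlift]].
    exists R2. split; [exact HR2|].
    intros u Hu. destruct (Hlift u Hu) as [y [Hy <-]]. exact (HX y Hy).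
  - intros [R2 [HR2 HX]].
    destruct (Hforth x R2 HR2) as [R1 [HR1 Hmap]].
    exists R1. split; [exact HR1|].
    intros y Hy. exact (HX _ (Hmap y Hy)).
Qed.

Lemma NFR_hom_MKF_hom : NFR_hom (nu_of S1) (nu_of S2) f -> MKF_hom S1 S2 f.
Proof.
  intros Hnu. split.
  - intros x R2 HR2.
    apply (Hnu x (image_of R2 (f x))).
    exists R2. split; auto.
  - intros x R1 HR1.
    apply (Hnu x (fun u => exists y, R1 x y /\ f y = u)).
    exists R1. split; [exact HR1|].
    intros y Hy. exists y. split; auto.
Qed.

End Homomorphisms.

Theorem lemma6p2 (K : Type) :
  (forall (W : Type) (S : rel W -> Prop),
      MKF_kappa K W S -> NFR_kappa K W (nu_of S)) /\
  (forall (W1 W2 : Type) (S1 : rel W1 -> Prop) (S2 : rel W2 -> Prop)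
          (f : W1 -> W2),
      MKF_kappa K W1 S1 -> MKF_kappa K W2 S2 ->
      (MKF_hom S1 S2 f <-> NFR_hom (nu_of S1) (nu_of S2) f)).
Proof.
  split.
  - exact (nu_of_kappa_complete K).
  - intros W1 W2 S1 S2 f _ _. split.
    + exact (MKF_hom_NFR_hom W1 W2 S1 S2 f).
    + exact (NFR_hom_MKF_hom W1 W2 S1 S2 f).
Qed.
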